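(* For each $*\in\{\mathrm{nc},\mathrm{c},\mathrm{cr},\mathrm{u},\mathrm{cu},\mathrm{cur}\}$ the functor $\mathfrak{P}^*:\mathbf{A}_*\to\mathbf{A}_*$ is homotopy invariant: if $f,g:A\to B$ are homotopic morphisms in $\mathbf{A}_*$, then $\mathfrak{P}^*(f)=\mathfrak{P}^*(g)$.
   Context: Fix a field $\mathbb{F}$; algebras are associative $\mathbb{F}$-algebras. $\mathbf{A}_{\mathrm{nc}}$: all algebras; $\mathbf{A}_{\mathrm{c}},\mathbf{A}_{\mathrm{cr}}$: commutative, resp. commutative reduced algebras; $\mathbf{A}_{\mathrm{u}}$: unital algebras with unit-preserving morphisms; $\mathbf{A}_{\mathrm{cu}},\mathbf{A}_{\mathrm{cur}}$: commutative, resp. commutative reduced unital algebras. For $*\in\{\mathrm{nc},\mathrm{c},\mathrm{cr}\}$ and $A\in\mathbf{A}_{\mathrm{nc}}$ (resp. $*\in\{\mathrm{u},\mathrm{cu},\mathrm{cur}\}$ and $A\in\mathbf{A}_{\mathrm{u}}$), $\mathfrak{P}^*(A)$ is the set of $a\in A$ such that for every $C\in\mathbf{A}_*$ and every algebra morphism (resp. unit-preserving morphism) $\varphi:A\to C[x]$, $\varphi(a)$ is a constant polynomial, i.e. lies in $C\subseteq C[x]$. (The paper defines $\mathfrak{P}^*(A)$ as the equalizer of two maps $A\to\varprojlim\mathfrak{M}^*_{A,\mathbb{F}[x]}$ induced by evaluation at $x=0$ and $x=1$, and proves it equals this set.) $\mathfrak{P}^*(A)$ is a subalgebra of $A$ and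 every morphism $f:A\to B$ maps $\mathfrak{P}^*(A)$ into $\mathfrak{P}^*(B)$; $\mathfrak{P}^*(f):=f|_{\mathfrak{P}^*(A)}$. Homotopy: for $B\in\mathbf{A}_*$, $B[x]=B\otimes\mathbb{F}[x]$, $\mathrm{p}_0,\mathrm{p}_1:B[x]\to B$ are evaluations at $0,1$; $f,g:A\to B$ are elementary homotopic in $\mathbf{A}_*$ if there is a morphism $H:A\to B[x]$ in $\mathbf{A}_*$ with $\mathrm{p}_0H=f$, $\mathrm{p}_1H=g$, and homotopic if connected by a finite chain of elementary homotopies. *)

From HB Require Import structures.
From mathcomp Require Import all_boot all_order all_algebra.
Set Implicit Arguments. Unset Strict Implicit. Unset Printing Implicit Defensive.
Import GRing.Theory.
Local Open Scope ring_scope.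

Record algebra (F : fieldType) := Algebra {
  asort :> lmodType F;
  amul : asort -> asort -> asort;
  amulA : forall a b c, amul a (amul b c) = amul (amul a b) c;
  amulDl : forall a b c, amul (a + b) c = amul a c + amul b c;
  amulDr : forall a b c, amul a (b + c) = amul a b + amul a c;
  amulZl : forall (k : F) a b, amul (k *: a) b = k *: amul a b;
  amulZr : forall (k : F) a b, amul a (k *: b) = k *: amul a b
}.

Section Algs.
Variable F : fieldType.

Inductive kind := nc | c | cr | u | cu | cur.

Definition is_unit (A : algebra F) (e : A) :=
  forall a : A, amul e a = a /\ amul a e = a.

Fixpoint apow (A : algebra F) (a : A) (n : nat) : A :=
  match n with 0 => a | n'.+1 => amul a (apow a n') end.
(* apow a n = a^(n+1) *)

Definition is_comm (A : algebra F) := forall a b : A, amul a b = amul b a.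
Definition is_reduced (A : algebra F) :=
  forall (a : A) (n : nat), apow a n = 0 -> a = 0.
Definition is_unital (A : algebra F) := exists e : A, is_unit e.

Definition unital_kind (k : kind) :=
  match k with nc | c | cr => false | _ => true end.

Definition in_class (k : kind) (A : algebra F) : Prop :=
  match k with
  | nc => True
  | c => is_comm A
  | cr => is_comm A /\ is_reduced A
  | u => is_unital A
  | cu => is_unital A /\ is_comm A
  | cur => is_unital A /\ is_comm A /\ is_reduced A
  end.

Definition is_morph (k : kind) (A B : algebra F) (f : A -> B) : Prop :=
  (forall (l : F) (a b : A), f (l *: a + b) = l *: f a + f b) /\
  (forall a b : A, f (amul a b) = amul (f a) (f b)) /\
  (unital_kind k -> forall (e : A) (e' : B), is_unit e -> is_unit e' -> f e = e').

(* The polynomial algebra C[x] = C (x) F[x]: finitely supported coefficient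
   sequences with the Cauchy product.  Polynomials are compared through their
   coefficients only (the bound is just a witness of finite support). *)
Record fpoly (C : algebra F) := FPoly {
  coef : nat -> C;
  bnd : nat;
  coefP : forall n, (bnd <= n)%N -> coef n = 0
}.

(* evaluation at x = 0 and x = 1 *)
Definition p0 (C : algebra F) (p : fpoly C) : C := coef p 0.
Definition p1 (C : algebra F) (p : fpoly C) : C := \sum_(n < bnd p) coef p n.

Definition is_const (C : algebra F) (p : fpoly C) := forall n, (0 < n)%N -> coef p n = 0.

(* Morphisms A -> C[x] in A_k (C[x] with its algebra structure; its unit is
   the constant polynomial e when e is the unit of C). *)
Definition is_pmorph (k : kind) (A C : algebra F) (phi : A -> fpoly C) : Prop :=
  (forall (l : F) (a b : A) n,
      coef (phi (l *: a + b)) n = l *: coef (phi a) n + coef (phi b) n) /\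
  (forall (a b : A) n,
      coef (phi (amul a b)) n =
        \sum_(i < n.+1) amul (coef (phi a) i) (coef (phi b) (n - i))) /\
  (unital_kind k -> forall (e : A) (e' : C), is_unit e -> is_unit e' ->
      coef (phi e) 0 = e' /\ forall n, (0 < n)%N -> coef (phi e) n = 0).

Definition frakP (k : kind) (A : algebra F) : A -> Prop :=
  fun a => forall (C : algebra F), in_class k C ->
    forall phi : A -> fpoly C, is_pmorph k phi -> is_const (phi a).

Definition elem_homotopic (k : kind) (A B : algebra F) (f g : A -> B) : Prop :=
  exists H : A -> fpoly B, is_pmorph k H /\
    (forall a, p0 (H a) = f a) /\ (forall a, p1 (H a) = g a).

Inductive homotopic (k : kind) (A B : algebra F) : (A -> B) -> (A -> B) -> Prop :=
  | homotopic_refl f : homotopic k f f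
  | homotopic_step f g h : elem_homotopic k f g -> homotopic k g h -> homotopic k f h.

End Algs.

From mathcomp Require Import all_boot all_order all_algebra.
Import GRing.Theory.
Local Open Scope ring_scope.

(* An elementary homotopy H : A -> B[x] is itself a morphism of A_* into a
   polynomial algebra over an object of A_*, so it maps every element of
   P^*(A) to a constant polynomial, whose values at x = 0 and x = 1 agree. *)

Section HomotopyInvariance.
Variable F : fieldType.

Lemma p1_const (C : algebra F) (p : fpoly C) : is_const p -> p1 p = p0 p.
Proof.
case: p => cf [|b] cfP /= p_const; rewrite /p1 /p0 /=.
  by rewrite big_ord0 cfP.
by rewrite big_ord_recl big1 ?addr0 // => i _; apply: p_const.
Qed.

Lemma elem_homotopic_frakP (k : kind) (A B : algebra F) (f g : A -> B) (a : A) :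
  in_class k B -> elem_homotopic k f g -> frakP k a -> f a = g a.
Proof.
move=> hB [H [H_morph [H0 H1]]] Pa.
by rewrite -H0 -H1 p1_const //; apply: Pa.
Qed.

End HomotopyInvariance.

Theorem mainTheorem8 (F : fieldType) (k : kind) (A B : algebra F)
  (hA : in_class k A) (hB : in_class k B) (f g : A -> B)
  (hf : is_morph k f) (hg : is_morph k g) (hfg : homotopic k f g) :
  forall a : A, frakP k a -> f a = g a.
Proof.
move=> a Pa.
elim: hfg => // f0 g0 h0 f0g0 _ <-.
exact: elem_homotopic_frakP hB f0g0 Pa.
Qed.
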